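(* Let $k$ be an algebraically closed field of characteristic zero and let $A$ be a standard graded $k$-algebra which is not a principal ideal algebra. Let $r=\operatorname{crit.deg.}(A)$ be its critical degree. Then there exists a surjective $k$-algebra homomorphism $$A\twoheadrightarrow Q(r)=k[X,Y]/\langle X^{r+1},X^rY,Y^2\rangle .$$
   Context: All algebras are commutative, unital and finite dimensional over $k$. A principal ideal algebra is a finite dimensional commutative $k$-algebra in which every ideal is principal. A finite dimensional non-negatively graded algebra $A=A_0\oplus A_1\oplus\cdots\oplus A_n$ is standard if $M=A_1\oplus\cdots\oplus A_n$ is a maximal ideal generated by elements of degree one. For such $A$ not a principal ideal algebra, let $\mathcal{E}$ be the set of $i\in\mathbb{N}$ for which there exist $N\ge0$ and a $k$-algebra homomorphism $\alpha:A\to k[t]/\langle t^{N+1}\rangle$ with $\dim_k\alpha(A_i)\ge2$; this set is finite and nonempty, and the critical degree is $\operatorname{crit.deg.}(A)=\max\mathcal{E}$. *)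

From HB Require Import structures.
From mathcomp Require Import all_boot all_order all_algebra falgebra.
Set Implicit Arguments. Unset Strict Implicit. Unset Printing Implicit Defensive.
Import Order.TTheory GRing.Theory.
Local Open Scope ring_scope.

Definition in_ideal (R : comNzRingType) (gs : seq R) (p : R) : Prop :=
  exists cs : seq R, size cs = size gs /\ p = \sum_(i < size gs) cs`_i * gs`_i.

Definition congr_mod (R : comNzRingType) (gs : seq R) (p q : R) : Prop :=
  in_ideal gs (p - q).

(* A k-algebra homomorphism  A -> R/<gs>,  represented by a map f : A -> R of
   representatives; emb : k -> R is the structure map of the k-algebra R. *)
Definition quot_hom (k : fieldType) (A : falgType k) (R : comNzRingType)
  (emb : k -> R) (gs : seq R) (f : A -> R) : Prop :=
  [/\ forall (c : k) (x y : A), congr_mod gs (f (c *: x + y)) (emb c * f x + f y),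
      congr_mod gs (f 1) 1
    & forall x y : A, congr_mod gs (f (x * y)) (f x * f y)].

Definition quot_hom_surj (k : fieldType) (A : falgType k) (R : comNzRingType)
  (gs : seq R) (f : A -> R) : Prop :=
  forall p : R, exists a : A, congr_mod gs (f a) p.

Definition is_ideal (k : fieldType) (A : falgType k) (I : {vspace A}) : Prop :=
  forall a x : A, x \in I -> a * x \in I.

Definition is_max_ideal (k : fieldType) (A : falgType k) (I : {vspace A}) : Prop :=
  [/\ is_ideal I, I != fullv &
      forall J : {vspace A}, is_ideal J -> (I <= J)%VS -> J = I \/ J = fullv].

Definition gen_ideal (k : fieldType) (A : falgType k) (s : seq A) (x : A) : Prop :=
  exists cs : seq A, size cs = size s /\ x = \sum_(i < size s) cs`_i * s`_i.

Definition is_principal_ideal_algebra (k : fieldType) (A : falgType k) : Prop :=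
  forall I : {vspace A}, is_ideal I ->
    exists g : A, forall x : A, x \in I <-> exists a : A, x = a * g.

Definition is_grading (k : fieldType) (A : falgType k) (n : nat)
  (G : nat -> {vspace A}) : Prop :=
  [/\ forall i, (n < i)%N -> G i = 0%VS,
      (\sum_(i < n.+1) G i)%VS = fullv,
      directv (\sum_(i < n.+1) G i)%VS
    & forall i j (x y : A), x \in G i -> y \in G j -> x * y \in G (i + j)%N].

Definition irrelevant_ideal (k : fieldType) (A : falgType k) (n : nat)
  (G : nat -> {vspace A}) : {vspace A} :=
  (\sum_(i < n.+1 | (0 < i)%N) G i)%VS.

Definition is_standard_grading (k : fieldType) (A : falgType k) (n : nat)
  (G : nat -> {vspace A}) : Prop :=
  [/\ is_grading n G,
      is_max_ideal (irrelevant_ideal n G)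
    & exists s : seq A, all (fun x => x \in G 1%N) s /\
        forall x : A, x \in irrelevant_ideal n G <-> gen_ideal s x].

(* i is in the set E: there are N and a k-algebra hom alpha : A -> k[t]/<t^(N+1)>
   with dim alpha(A_i) >= 2, i.e. alpha(A_i) contains two linearly independent
   elements. *)
Definition in_E (k : fieldType) (A : falgType k) (G : nat -> {vspace A}) (i : nat)
  : Prop :=
  exists (N : nat) (alpha : A -> {poly k}),
    quot_hom (fun c : k => c%:P) [:: 'X^(N.+1)] alpha /\
    exists a b : A, [/\ a \in G i, b \in G i &
      forall c d : k,
        congr_mod [:: 'X^(N.+1)] (c%:P * alpha a + d%:P * alpha b) 0 ->
        c = 0 /\ d = 0].

Definition is_crit_deg (k : fieldType) (A : falgType k) (G : nat -> {vspace A})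
  (r : nat) : Prop :=
  in_E G r /\ forall i, in_E G i -> (i <= r)%N.

(* Q(r) = k[X,Y]/<X^(r+1), X^r Y, Y^2>, with k[X,Y] = {poly {poly k}},
   X the outer variable 'X and Y the inner variable 'X%:P. *)
Definition QX (k : fieldType) : {poly {poly k}} := 'X.
Definition QY (k : fieldType) : {poly {poly k}} := ('X)%:P.
Definition Q_rels (k : fieldType) (r : nat) : seq {poly {poly k}} :=
  [:: QX k ^+ r.+1; QX k ^+ r * QY k; QY k ^+ 2].

From HB Require Import structures.
From mathcomp Require Import all_boot all_order all_algebra falgebra.
From mathcomp Require Import ring zify.
From Stdlib Require Import Classical Wf_nat.
(* Let alpha : A -> k[t]/(t^(N+1)) witness r in E.  Let a be the least t-order of alpha
   on A_1, attained at x0, write W = alpha(x0) = t^a V, and let b >= 1 be maximal such that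
   alpha(A_1) agrees with multiples of W below order a + b.  As A is generated in degree one,
   for x in A_d (d >= 1) the series alpha(x) agrees up to order da + b with
   t^(da) V^d (l + m t^b) = l W^d + m W^(d-1) (W t^b) for scalars l = lam_d(x), m = mu_d(x),
   and these scalars multiply like the coefficients of l X^d + m X^(d-1) Y in Q(r).
   If ra + b > N, alpha(A_r) would lie on the line through W^r, contradicting
   dim alpha(A_r) >= 2; hence lam_d, mu_d are defined for d <= r, and sending x in A_d to
   lam_d(x) X^d + mu_d(x) X^(d-1) Y is a homomorphism onto Q(r): X is the image of x0, and
   Y is hit thanks to a degree-one element with mu_1 <> 0, which exists by maximality of b.
   In degree zero A_0 = k, as A_0 = A/M is a field finite over the algebraically closed k. *)

Set Implicit Arguments. Unset Strict Implicit. Unset Printing Implicit Defensive.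
Import GRing.Theory.
Local Open Scope ring_scope.

Lemma exists_threshold (P : nat -> Prop) m : P 1 -> ~ P m.+1 ->
  exists b, [/\ (0 < b)%N, P b & ~ P b.+1].
Proof.
move=> P1; elim: m => [|m ih] notP; first by [].
by have [Pm|notPm] := classic (P m.+1); [exists m.+1 | exact: ih].
Qed.

Section Ideals.
Variables (R : comNzRingType) (gs : seq R).

Lemma in_idealP p :
  in_ideal gs p <-> exists c : 'I_(size gs) -> R, p = \sum_i c i * gs`_i.
Proof.
split=> [[cs [_ ->]]|[c ->]]; first by exists (fun i => cs`_i).
exists [tuple c i | i < size gs]; rewrite size_tuple; split=> //.
by apply: eq_bigr => i _; rewrite -tnth_nth tnth_mktuple.
Qed.

Lemma in_ideal0 : in_ideal gs 0.
Proof. by apply/in_idealP; exists (fun=> 0); rewrite big1 // => i _; rewrite mul0r. Qed.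

Lemma in_idealD p q : in_ideal gs p -> in_ideal gs q -> in_ideal gs (p + q).
Proof.
move=> /in_idealP[c ->] /in_idealP[d ->]; apply/in_idealP.
by exists (fun i => c i + d i); rewrite -big_split; apply: eq_bigr => i _; rewrite mulrDl.
Qed.

Lemma in_idealMl p q : in_ideal gs q -> in_ideal gs (p * q).
Proof.
move=> /in_idealP[c ->]; apply/in_idealP.
by exists (fun i => p * c i); rewrite mulr_sumr; apply: eq_bigr => i _; rewrite mulrA.
Qed.

Lemma in_ideal_nth i : (i < size gs)%N -> in_ideal gs gs`_i.
Proof.
move=> lt_i; apply/in_idealP; exists (fun j => (j == Ordinal lt_i)%:R).
by rewrite (bigD1 (Ordinal lt_i)) //= eqxx mul1r big1 ?addr0 // => j /negbTE->; rewrite mul0r.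
Qed.

Lemma in_ideal_sum (I : finType) (F : I -> R) :
  (forall i, in_ideal gs (F i)) -> in_ideal gs (\sum_i F i).
Proof. by move=> hF; elim/big_rec: _ => [|i p _]; [exact: in_ideal0 | exact: in_idealD]. Qed.

Lemma congr_mod_refl p : congr_mod gs p p.
Proof. by rewrite /congr_mod subrr; exact: in_ideal0. Qed.

Lemma congr_mod_trans p q u : congr_mod gs p q -> congr_mod gs q u -> congr_mod gs p u.
Proof. by move=> hpq hqu; have := in_idealD hpq hqu; rewrite addrA subrK. Qed.

Lemma congr_modD p q p' q' :
  congr_mod gs p q -> congr_mod gs p' q' -> congr_mod gs (p + p') (q + q').
Proof. by rewrite /congr_mod opprD addrACA; exact: in_idealD. Qed.

Lemma congr_modM p q p' q' :
  congr_mod gs p q -> congr_mod gs p' q' -> congr_mod gs (p * p') (q * q').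
Proof.
move=> h h'; rewrite /congr_mod.
suff -> : p * p' - q * q' = p' * (p - q) + q * (p' - q') by apply: in_idealD; exact: in_idealMl.
by ring.
Qed.

Lemma congr_mod_sum (I : finType) (F F' : I -> R) :
  (forall i, congr_mod gs (F i) (F' i)) -> congr_mod gs (\sum_i F i) (\sum_i F' i).
Proof. by move=> hF; rewrite /congr_mod -sumrB; exact: in_ideal_sum. Qed.

End Ideals.

Lemma congr_modXnP (R : comNzRingType) N (p q : {poly R}) :
  congr_mod [:: 'X^(N.+1)] p q <-> forall i, (i <= N)%N -> p`_i = q`_i.
Proof.
split=> [/in_idealP[c eq_pq] i le_iN|eq_pq].
  by apply/eqP; rewrite -subr_eq0 -coefB eq_pq big_ord1 coefMXn ltnS le_iN.
apply/in_idealP; exists (fun=> drop_poly N.+1 (p - q)); rewrite big_ord1 /=.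
suff take0 : take_poly N.+1 (p - q) = 0 by rewrite -{1}(poly_take_drop N.+1 (p - q)) take0 add0r.
apply/polyP => i; rewrite coef_take_poly coef0 coefB.
by case: ifP => // lt_iN; rewrite eq_pq ?subrr.
Qed.

Lemma coef_quot_hom (k : fieldType) (A : falgType k) N (al : A -> {poly k}) :
  quot_hom (fun c => c%:P) [:: 'X^(N.+1)] al ->
  [/\ forall c x y i, (i <= N)%N -> (al (c *: x + y))`_i = c * (al x)`_i + (al y)`_i,
      forall i, (i <= N)%N -> (al 1)`_i = (1 : {poly k})`_i
    & forall x y i, (i <= N)%N -> (al (x * y))`_i = (al x * al y)`_i].
Proof.
case=> al_lin al1 al_mul; split=> [c x y i|i|x y i] le_iN.
- by move/congr_modXnP: (al_lin c x y) => ->; rewrite // coefD coefCM.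
- by move/congr_modXnP: al1; apply.
- by move/congr_modXnP: (al_mul x y); apply.
Qed.

Lemma coefM_eq_upto (R : nzRingType) K o1 o2 (p P q Q : {poly R}) :
  (forall j, (j <= K)%N -> (j < o1)%N -> p`_j = 0 /\ P`_j = 0) ->
  (forall j, (j <= K)%N -> (j < o2)%N -> q`_j = 0 /\ Q`_j = 0) ->
  (forall j, (j + o2 <= K)%N -> p`_j = P`_j) ->
  (forall j, (j + o1 <= K)%N -> q`_j = Q`_j) ->
  forall i, (i <= K)%N -> (p * q)`_i = (P * Q)`_i.
Proof.
move=> low_p low_q eq_p eq_q i le_iK; rewrite !coefM; apply: eq_bigr => -[j /= le_ji] _.
have le_jK : (j <= K)%N by lia.
have [lt_j|ge_j] := ltnP j o1.
  by have [-> ->] := low_p j le_jK lt_j; rewrite !mul0r.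
have [lt_ij|ge_ij] := ltnP (i - j) o2.
  by have [-> ->] := low_q (i - j)%N (leq_trans (leq_subr _ _) le_iK) lt_ij; rewrite !mulr0.
by rewrite eq_p ?eq_q //; lia.
Qed.

Definition qform (R : nzRingType) (X Y : R) (d : nat) (l m : R) : R :=
  l * X ^+ d + m * (X ^+ d.-1 * Y).

Lemma qformD (R : nzRingType) (X Y : R) d l1 m1 l2 m2 :
  qform X Y d (l1 + l2) (m1 + m2) = qform X Y d l1 m1 + qform X Y d l2 m2.
Proof. by rewrite /qform !mulrDl addrACA. Qed.

Lemma qform_mul (R : comNzRingType) (X Y : R) d e l1 m1 l2 m2 : (0 < d)%N -> (0 < e)%N ->
  qform X Y d l1 m1 * qform X Y e l2 m2 =
  qform X Y (d + e) (l1 * l2) (l1 * m2 + m1 * l2) + m1 * m2 * X ^+ (d + e).-2 * Y ^+ 2.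
Proof.
case: d => // d; case: e => // e _ _; rewrite /qform addSn addnS /= !exprS exprD; ring.
Qed.

Lemma bivariate_poly_ind (R : nzRingType) (S : {poly {poly R}} -> Prop) :
  (forall c, S c%:P%:P) -> S 'X -> S 'X%:P ->
  (forall p q, S p -> S q -> S (p + q)) -> (forall p q, S p -> S q -> S (p * q)) ->
  forall p, S p.
Proof.
move=> SC SX SY SD SM.
have SCP c : S c%:P.
  elim/poly_ind: c => [|c a Sc]; first by have := SC 0; rewrite polyC0.
  by rewrite polyCD polyCM; apply: SD => //; apply: SM.
by elim/poly_ind => [|p c Sp]; [exact: SCP | apply: SD => //; apply: SM].
Qed.

Section QuotientQ.
Variables (k : fieldType) (r : nat).
Local Notation cQ := (congr_mod (Q_rels k r)).

Lemma qform_Q_high d l m : (r < d)%N -> in_ideal (Q_rels k r) (qform (QX k) (QY k) d l m).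
Proof.
move=> lt_rd; suff -> : qform (QX k) (QY k) d l m =
    l * QX k ^+ (d - r.+1) * QX k ^+ r.+1 + m * QX k ^+ (d - r.+1) * (QX k ^+ r * QY k).
  apply: in_idealD; apply: in_idealMl.
    exact: (@in_ideal_nth _ _ 0).
  exact: (@in_ideal_nth _ _ 1).
by rewrite /qform -{1 2}(subnK lt_rd) exprD addnS /= exprD; ring.
Qed.

Lemma qform_Q_mul d e l1 m1 l2 m2 : (0 < d)%N -> (0 < e)%N ->
  cQ (qform (QX k) (QY k) (d + e) (l1 * l2) (l1 * m2 + m1 * l2))
     (qform (QX k) (QY k) d l1 m1 * qform (QX k) (QY k) e l2 m2).
Proof.
move=> d_gt0 e_gt0; rewrite qform_mul // /congr_mod opprD addrA subrr sub0r -mulNr.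
by apply: in_idealMl; exact: (@in_ideal_nth _ _ 2).
Qed.

End QuotientQ.

Section Grading.
Variables (k : fieldType) (A : falgType k) (n : nat) (G : nat -> {vspace A}).
Hypothesis gradingG : is_grading n G.

Definition hcomp (e : nat) : 'End(A) :=
  if (e < n.+1)%N then sumv_pi (\sum_(i < n.+1) G i)%VS (inord e) else 0%VF.

Lemma hcomp_mem e x : hcomp e x \in G e.
Proof.
rewrite /hcomp; case: ifP => [lt_en|_]; last by rewrite lfunE mem0v.
by have := memv_sum_pi (erefl (\sum_(i < n.+1) G i)%VS) (inord e) x; rewrite inordK.
Qed.

Lemma hcomp_out e x : (n < e)%N -> hcomp e x = 0.
Proof. by move=> lt_ne; rewrite /hcomp ltnS leqNgt lt_ne /= lfunE. Qed.

Lemma hcomp_sum x : \sum_(i < n.+1) hcomp i x = x.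
Proof.
have [_ sumG _ _] := gradingG.
have Gx : x \in (\sum_(i < n.+1) G i)%VS by rewrite sumG memvf.
rewrite -[RHS](sumv_pi_sum (erefl (\sum_(i < n.+1) G i)%VS) Gx).
by apply: eq_bigr => i _; rewrite /hcomp ltn_ord inord_val.
Qed.

Lemma hcompE d x e : x \in G d -> hcomp e x = if e == d then x else 0.
Proof.
have [G_out _ dirG _] := gradingG; move=> Gx.
have [lt_nd|le_dn] := ltnP n d.
  by move: Gx; rewrite G_out // memv0 => /eqP->; rewrite linear0; case: eqP.
have [lt_ne|le_en] := ltnP n e.
  by rewrite hcomp_out //; case: eqP => // eq_ed; move: lt_ne; rewrite eq_ed ltnNge le_dn.
pose u (j : 'I_n.+1) := if (j : nat) == d then x else 0.
have Gu j : u j \in G j by rewrite /u; case: eqP => [->|_]; rewrite ?mem0v.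
have sum_u : \sum_j u j = x.
  rewrite (bigD1 (Ordinal (le_dn : (d < n.+1)%N))) //= /u eqxx big1 ?addr0 // => j.
  by rewrite -val_eqE /= => /negbTE->.
have := (directv_sum_unique dirG) (fun j : 'I_n.+1 => hcomp j x) u
  (fun j _ => hcomp_mem j x) (fun j _ => Gu j).
rewrite hcomp_sum sum_u eqxx => /esym/forall_inP/(_ (Ordinal (le_en : (e < n.+1)%N)) isT).
by move/eqP.
Qed.

Lemma hcomp_id d x : x \in G d -> hcomp d x = x.
Proof. by move=> Gx; rewrite (hcompE _ Gx) eqxx. Qed.

Lemma mul_homog i j x y : x \in G i -> y \in G j -> x * y \in G (i + j).
Proof. by have [_ _ _ mulG] := gradingG; exact: mulG. Qed.

Definition deg_ge j x := forall i, (i < j)%N -> hcomp i x = 0.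

Lemma deg_geM i j x y : deg_ge i x -> deg_ge j y -> deg_ge (i + j) (x * y).
Proof.
move=> hx hy e lt_e; rewrite -(hcomp_sum x) -(hcomp_sum y) mulr_suml linear_sum /= big1 //.
move=> i' _; rewrite mulr_sumr linear_sum /= big1 // => j' _.
have [lt_i'|ge_i'] := ltnP i' i; first by rewrite hx // mul0r linear0.
have [lt_j'|ge_j'] := ltnP j' j; first by rewrite hy // mulr0 linear0.
by rewrite (hcompE _ (mul_homog (hcomp_mem _ _) (hcomp_mem _ _))); case: eqP => //; lia.
Qed.

Lemma nilpotent_deg_ge1 m : deg_ge 1 m -> m ^+ n.+1 = 0.
Proof.
move=> m_ge1; have m_ge j : deg_ge j (m ^+ j).
  by elim: j => [|j ih] //; rewrite exprSr -addn1; apply: deg_geM.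
by rewrite -[LHS]hcomp_sum big1 // => i _; apply: m_ge.
Qed.

Lemma mem_irrelevant_ideal m : m \in irrelevant_ideal n G <-> hcomp 0 m = 0.
Proof.
rewrite /irrelevant_ideal; split=> [/memv_sumP[u Gu ->]|hm0].
  rewrite linear_sum /= big1 // => i i_gt0.
  by rewrite (hcompE _ (Gu i i_gt0)) eq_sym eqn0Ngt i_gt0.
rewrite -(hcomp_sum m) (bigID (fun i : 'I_n.+1 => (0 < i)%N)) /= [X in _ + X]big1 ?addr0.
  by apply: memv_sumr => i _; exact: hcomp_mem.
by move=> i; rewrite lt0n negbK => /eqP->.
Qed.

Lemma one_G0 : (1 : A) \in G 0.
Proof.
set e := hcomp 0 1; have Ge : e \in G 0 := hcomp_mem 0 1.
have ge1 : deg_ge 1 (1 - e).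
  by case=> // _; rewrite linearB /= (hcomp_id Ge) subrr.
have idem_e : e * e = e.
  have Gee : e * (1 - e) \in G 0 by rewrite mulrBr mulr1 memvB // (mul_homog Ge Ge).
  have ge0 : deg_ge 0 e by [].
  have := deg_geM ge0 ge1 (isT : (0 < 0 + 1)%N).
  by rewrite (hcomp_id Gee) mulrBr mulr1 => /eqP; rewrite subr_eq0 => /eqP.
have idem_1e j : (1 - e) ^+ j.+1 = 1 - e.
  elim: j => // j ih; rewrite exprSr ih mulrBl mul1r mulrBr mulr1 idem_e.
  by rewrite subrr subr0.
have := nilpotent_deg_ge1 ge1; rewrite idem_1e => /eqP; rewrite subr_eq0 => /eqP->.
exact: Ge.
Qed.

Lemma hcompMG d e x y : y \in G e -> hcomp (d + e) (x * y) = hcomp d x * y.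
Proof.
move=> Gy; rewrite -{1}(hcomp_sum x) mulr_suml linear_sum /=.
rewrite (eq_bigr (fun i : 'I_n.+1 => if (i : nat) == d then hcomp i x * y else 0)); last first.
  by move=> i _; rewrite (hcompE _ (mul_homog (hcomp_mem i x) Gy)) eqn_add2r eq_sym.
have [lt_dn|ge_dn] := ltnP d n.+1.
  rewrite (bigD1 (Ordinal lt_dn)) //= eqxx big1 ?addr0 // => j.
  by rewrite -val_eqE /= => /negbTE->.
rewrite hcomp_out // mul0r big1 // => i _; case: eqP => // eq_id.
by move: (ltn_ord i); rewrite eq_id ltnNge ge_dn.
Qed.

Lemma homog_ind (s : seq A) : all (fun x => x \in G 1) s ->
  (forall x, x \in irrelevant_ideal n G -> gen_ideal s x) ->
  forall P : nat -> A -> Prop, (forall d, P d 0) ->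
  (forall d x y, P d x -> P d y -> P d (x + y)) ->
  (forall y, y \in G 1 -> P 1 y) ->
  (forall d x y, (0 < d)%N -> x \in G d -> y \in G 1 -> P d x -> P d.+1 (x * y)) ->
  forall d, (0 < d)%N -> forall x, x \in G d -> P d x.
Proof.
move=> s1 gen_s P P0 PD P1 PM; elim=> [//|d ih] _ x Gx.
have [d0|d_gt0] := posnP d; first by rewrite d0 in Gx *; exact: P1.
have [cs [_ ex]] : gen_ideal s x.
  by apply/gen_s/mem_irrelevant_ideal; rewrite (hcompE _ Gx).
rewrite -(hcomp_id Gx) ex linear_sum /=; elim/big_rec: _ => [|i y _ Py]; first exact: P0.
apply: PD => //; have s1i : s`_i \in G 1 by move/(all_nthP 0): s1; apply.
rewrite -addn1 hcompMG // addn1; apply: PM => //; first exact: hcomp_mem.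
by apply: ih => //; exact: hcomp_mem.
Qed.

End Grading.

Lemma unitr_1subr_nilpotent (R : unitRingType) (m : R) N : m ^+ N = 0 -> 1 - m \is a GRing.unit.
Proof.
move=> mN0; have inv_1m : (1 - m) * \sum_(i < N) m ^+ i = 1.
  by rewrite -opprB mulNr -subrX1 mN0 sub0r opprK.
apply/unitrP; exists (\sum_(i < N) m ^+ i); split=> //; rewrite -[RHS]inv_1m.
apply/esym/commr_sum => i _; apply/commr_sym/commrB; first exact: commr1.
exact/commr_sym/commrX.
Qed.

Lemma exists_annihilating_poly (k : fieldType) (A : falgType k) (z : A) :
  exists2 p : {poly k}, p != 0 & horner_alg z p = 0.
Proof.
set D := \dim (fullv : {vspace A}); pose X := [tuple z ^+ i | i < D.+1].
have notfree : ~ free X.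
  move=> /eqP freeX; have := dimvS (subvf <<X>>%VS).
  by rewrite freeX size_tuple ltnn.
have [c [sum_c [i ci_neq0]]] : exists c : 'I_D.+1 -> k,
    \sum_(i < D.+1) c i *: X`_i = 0 /\ exists i, c i != 0.
  apply: NNPP => no_c; apply/notfree/freeP => c sum_c i.
  by apply: NNPP => /eqP ci_neq0; apply: no_c; exists c; split; last exists i.
exists (\poly_(i < D.+1) c (inord i)).
  apply: contraNneq ci_neq0 => /polyP/(_ i).
  by rewrite coef_poly ltn_ord coef0 inord_val => ->.
rewrite poly_def linear_sum -[RHS]sum_c; apply: eq_bigr => j _ /=.
rewrite linearZ /= rmorphXn /= horner_algX inord_val mulr_algl.
by rewrite (nth_mktuple (fun i : 'I_D.+1 => z ^+ i)).
Qed.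

Section DegreeZero.
Variables (k : closedFieldType) (A : falgType k) (n : nat) (G : nat -> {vspace A}).
Hypotheses (gradingG : is_grading n G) (maxM : is_max_ideal (irrelevant_ideal n G)).
Hypothesis commA : forall x y : A, x * y = y * x.

Lemma G0_unit w : w \in G 0 -> w = 0 \/ w \is a GRing.unit.
Proof.
move=> Gw; have [idealM _ maxlM] := maxM.
set M := irrelevant_ideal n G; set J := (M + limg (amulr w))%VS.
have amulrE v : amulr w v = v * w by rewrite lfunE.
have idealJ : is_ideal J.
  move=> a _ /memv_addP[m Mm [_ /memv_imgP[v _ ->] ->]].
  rewrite amulrE mulrDr mulrA; apply: memv_add; first exact: idealM.
  by rewrite -amulrE; apply: memv_img; exact: memvf.
have wJ : w \in J.
  have : amulr w 1 \in limg (amulr w) by apply: memv_img; exact: memvf.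
  by rewrite amulrE mul1r; apply: subvP; exact: addvSr.
have [JM|J1] := maxlM J idealJ (addvSl _ _).
  by left; move: wJ; rewrite JM => /(mem_irrelevant_ideal gradingG); rewrite (hcomp_id gradingG Gw).
right; have : (1 : A) \in J by rewrite J1 memvf.
move=> /memv_addP[m Mm [_ /memv_imgP[v _ ->] one_eq]]; rewrite amulrE in one_eq.
have : v * w \is a GRing.unit.
  have -> : v * w = 1 - m by rewrite one_eq addrC addKr.
  apply: (unitr_1subr_nilpotent (N := n.+1)); apply: (nilpotent_deg_ge1 gradingG) => -[|//] _.
  exact/(mem_irrelevant_ideal gradingG).
by rewrite unitrM_comm ?[comm _ _]commA // => /andP[].
Qed.

Lemma G0_scalar z : z \in G 0 -> exists c : k, z = c%:A.
Proof.
move=> Gz; have [p p_neq0 pz0] := exists_annihilating_poly z.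
have [rs p_eq] := closed_field_poly_normal p.
apply: NNPP => not_scalar.
have unit_factor c : z - c%:A \is a GRing.unit.
  have [/eqP|//] := G0_unit (rpredB Gz (rpredZ c (one_G0 gradingG))).
  by rewrite subr_eq0 => /eqP zc; case: not_scalar; exists c.
move: pz0; rewrite p_eq linearZ rmorph_prod /= mulr_algl.
under eq_bigr do rewrite rmorphB /= horner_algX horner_algC.
move/eqP; rewrite scaler_eq0 lead_coef_eq0 (negbTE p_neq0) /= => /eqP prod0.
by have := unitr_prod (P := xpredT) rs (fun c _ => unit_factor c); rewrite prod0 unitr0.
Qed.

End DegreeZero.

Section TruncatedHom.
Variables (k : fieldType) (A : falgType k) (n : nat) (G : nat -> {vspace A}).
Hypothesis gradingG : is_grading n G.
Variable s : seq A.
Hypotheses (s1 : all (fun x => x \in G 1) s)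
  (gen_s : forall x, x \in irrelevant_ideal n G -> gen_ideal s x).
Variables (N : nat) (al : A -> {poly k}).
Hypothesis al_lin : forall c x y i, (i <= N)%N ->
  (al (c *: x + y))`_i = c * (al x)`_i + (al y)`_i.
Hypothesis al_mul : forall x y i, (i <= N)%N -> (al (x * y))`_i = (al x * al y)`_i.

Lemma coef_al0 i : (i <= N)%N -> (al 0)`_i = 0.
Proof.
move=> le_iN; have := al_lin 1 0 0 le_iN; rewrite scale1r addr0 mul1r => al00.
by apply: (@addrI _ (al 0)`_i); rewrite -al00 addr0.
Qed.

Lemma coef_alD x y i : (i <= N)%N -> (al (x + y))`_i = (al x)`_i + (al y)`_i.
Proof. by move=> le_iN; rewrite -{1}[x]scale1r al_lin // mul1r. Qed.

Lemma coef_alZ c x i : (i <= N)%N -> (al (c *: x))`_i = c * (al x)`_i.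
Proof. by move=> le_iN; rewrite -[c *: x]addr0 al_lin // coef_al0 // addr0. Qed.

Definition agree_below K (p q : {poly k}) := forall i, (i <= N)%N -> (i < K)%N -> p`_i = q`_i.

Definition near_line K (U : {vspace A}) (P : {poly k}) :=
  forall x, x \in U -> exists l, agree_below K (al x) (l *: P).

Lemma al_vanish_of_A1 : near_line N.+1 (G 1) 0 ->
  forall d, (0 < d)%N -> near_line N.+1 (G d) 0.
Proof.
move=> A1_0; apply: (homog_ind gradingG s1 gen_s) => [d|d x y|//|d x y _ _ _].
- by exists 0 => i le_iN _; rewrite coef_al0 // scaler0 coef0.
- move=> [l1 hx] [l2 hy]; exists 0 => i le_iN lt_iN.
  by rewrite coef_alD // hx // hy // !scaler0 coef0 addr0.
move=> [l hx]; exists 0 => i le_iN _; rewrite al_mul // coefM scaler0 coef0 big1 // => j _.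
by rewrite hx ?scaler0 ?coef0 ?mul0r //; have := ltn_ord j; lia.
Qed.

Lemma indep_not_near_line (U : {vspace A}) P u v : u \in U -> v \in U ->
  (forall c d : k, congr_mod [:: 'X^(N.+1)] (c%:P * al u + d%:P * al v) 0 -> c = 0 /\ d = 0) ->
  ~ near_line N.+1 U P.
Proof.
move=> Uu Uv indep near; have [l1 hu] := near u Uu; have [l2 hv] := near v Uv.
have [l2_0 l1_0] : l2 = 0 /\ - l1 = 0.
  apply: indep; apply/congr_modXnP => i le_iN.
  by rewrite coefD !coefCM hu // hv // !coefZ coef0; ring.
have [] : (1 : k) = 0 /\ (0 : k) = 0.
  apply: indep; apply/congr_modXnP => i le_iN; rewrite coefD !coefCM hu // hv // !coefZ coef0.
  by rewrite l2_0 -[l1]opprK l1_0; ring.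
by move/eqP; rewrite oner_eq0.
Qed.

Lemma near_line_G0 : (forall z, z \in G 0 -> exists c : k, z = c%:A) ->
  near_line N.+1 (G 0) (al 1).
Proof.
by move=> G0_scalar z /G0_scalar[c ->]; exists c => i le_iN _; rewrite coef_alZ // coefZ.
Qed.

Lemma exists_min_order : ~ near_line N.+1 (G 1) 0 ->
  exists a x0, [/\ x0 \in G 1, (a <= N)%N, (al x0)`_a != 0 &
    forall y, y \in G 1 -> forall i, (i < a)%N -> (al y)`_i = 0].
Proof.
move=> not_near0.
have ex_order : exists i, (i <= N)%N /\ exists2 y, y \in G 1 & (al y)`_i != 0.
  apply: NNPP => no_order; apply: not_near0 => y Gy; exists 0 => i le_iN _.
  rewrite scaler0 coef0; apply/eqP; apply: NNPP => /negP nz.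
  by apply: no_order; exists i; split; last exists y.
have [a [[[le_aN [x0 G1x0 nz]] min_a] _]] :=
  dec_inh_nat_subset_has_unique_least_element _ (fun i => classic _) ex_order.
exists a, x0; split=> // y Gy i lt_ia; apply/eqP; apply: NNPP => /negP nz_i.
have /leP := min_a i (conj (ltnW (leq_trans lt_ia le_aN)) (ex_intro2 _ _ y Gy nz_i)).
by rewrite leqNgt lt_ia.
Qed.

Section MinOrder.
Variables (a : nat) (x0 : A).
Hypotheses (G1x0 : x0 \in G 1) (le_aN : (a <= N)%N) (Wa_neq0 : (al x0)`_a != 0).
Hypothesis low_A1 : forall y, y \in G 1 -> forall i, (i < a)%N -> (al y)`_i = 0.

Local Notation W := (al x0).
Definition V := drop_poly a W.

Lemma W_expE d : W ^+ d = 'X^(d * a) * V ^+ d.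
Proof.
have -> : W = 'X^a * V.
  apply/polyP => i; rewrite coefXnM; case: ifP => [lt_ia|/negbT]; first exact: low_A1.
  by rewrite -leqNgt coef_drop_poly => /subnK->.
by rewrite exprMn -exprM mulnC.
Qed.

Lemma coef_W_exp_low d i : (i < d * a)%N -> (W ^+ d)`_i = 0.
Proof. by move=> lt_i; rewrite W_expE coefXnM lt_i. Qed.

Lemma V_neq0 : V`_0 != 0.
Proof. by rewrite coef_drop_poly add0n. Qed.

Section Approximant.
Variable b : nat.
Hypotheses (b_gt0 : (0 < b)%N) (near_A1 : near_line (a + b) (G 1) W).

Definition approx d l m := qform W (W * 'X^b) d l%:P m%:P.

Lemma approxE d l m : (0 < d)%N -> approx d l m = W ^+ d * (l%:P + m%:P * 'X^b).
Proof. by case: d => // d _; rewrite /approx /qform /= exprS; ring. Qed.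

Lemma coef_approx_low d l m i : (0 < d)%N -> (i < d * a)%N -> (approx d l m)`_i = 0.
Proof. by move=> d_gt0 lt_i; rewrite approxE // W_expE -!mulrA coefXnM lt_i. Qed.

Lemma coef_approx_ord d l m : (0 < d)%N -> (approx d l m)`_(d * a) = V`_0 ^+ d * l.
Proof.
move=> d_gt0; rewrite approxE // W_expE -mulrA coefXnM ltnn subnn coef0M.
rewrite -!horner_coef0 !hornerE expr0n /=.
by rewrite (negbTE (lt0n_neq0 b_gt0)) mulr0 addr0.
Qed.

Lemma coef_approx_b d l m : (0 < d)%N ->
  (approx d l m)`_(d * a + b) = (V ^+ d)`_b * l + V`_0 ^+ d * m.
Proof.
move=> d_gt0; rewrite approxE // W_expE -mulrA coefXnM ltnNge leq_addr /= addKn.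
rewrite mulrDr coefD coefMC mulrA coefMXn ltnn subnn coefMC.
by rewrite -horner_coef0 horner_exp horner_coef0.
Qed.

Lemma coef_approx_mid d l m i : (0 < d)%N -> (i < d * a + b)%N ->
  (approx d l m)`_i = l * (W ^+ d)`_i.
Proof.
move=> d_gt0 lt_i; rewrite approxE // mulrDr mulrA coefD !coefMC coefMXn.
case: ltnP => [_|le_bi]; first by rewrite addr0 mulrC.
by rewrite coefMC (coef_W_exp_low (i := (i - b)%N)) ?mul0r ?addr0 1?mulrC //; lia.
Qed.

Definition lam d x := (al x)`_(d * a) / V`_0 ^+ d.
Definition mu d x := ((al x)`_(d * a + b) - lam d x * (V ^+ d)`_b) / V`_0 ^+ d.

Definition approximates d x l m := agree_below (d * a + b).+1 (al x) (approx d l m).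

Lemma approximates_lam_mu d x l m : (d * a + b <= N)%N -> (0 < d)%N ->
  approximates d x l m -> lam d x = l /\ mu d x = m.
Proof.
move=> le_N d_gt0 hx; have V0d_neq0 : V`_0 ^+ d != 0 by rewrite expf_neq0 ?V_neq0.
have lam_eq : lam d x = l.
  by rewrite /lam hx; [rewrite coef_approx_ord // mulrAC mulfV ?mul1r | lia | lia].
split=> //; rewrite /mu hx // coef_approx_b // lam_eq.
by rewrite (mulrC l) addrAC subrr add0r mulrAC mulfV ?mul1r.
Qed.

Lemma lam_lin d c x y : (d * a <= N)%N -> lam d (c *: x + y) = c * lam d x + lam d y.
Proof. by move=> le_N; rewrite /lam al_lin // mulrDl mulrA. Qed.

Lemma mu_lin d c x y : (d * a + b <= N)%N -> mu d (c *: x + y) = c * mu d x + mu d y.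
Proof. by move=> le_N; rewrite /mu lam_lin ?al_lin //; [ring | lia]. Qed.

Lemma approximates0 d : approximates d 0 0 0.
Proof. by move=> i le_iN _; rewrite coef_al0 // /approx /qform !mul0r addr0 coef0. Qed.

Lemma approximatesD d x y l1 m1 l2 m2 : approximates d x l1 m1 -> approximates d y l2 m2 ->
  approximates d (x + y) (l1 + l2) (m1 + m2).
Proof.
move=> hx hy i le_iN lt_i.
by rewrite coef_alD // hx // hy // -coefD /approx !polyCD qformD.
Qed.

Lemma approximatesM d e x y l1 m1 l2 m2 : (0 < d)%N -> (0 < e)%N ->
  approximates d x l1 m1 -> approximates e y l2 m2 ->
  approximates (d + e) (x * y) (l1 * l2) (l1 * m2 + m1 * l2).
Proof.
move=> d_gt0 e_gt0 hx hy i le_iN lt_i.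
have le_iK : (i <= minn N ((d + e) * a + b))%N by rewrite leq_min le_iN.
rewrite al_mul // (coefM_eq_upto (o1 := d * a) (o2 := e * a)
  (P := approx d l1 m1) (Q := approx e l2 m2) _ _ _ _ le_iK).
- rewrite /approx qform_mul // -!polyCM -polyCD coefD.
  have -> j : (m1 * m2)%:P * W ^+ j * (W * 'X^b) ^+ 2 =
               W ^+ j * W ^+ 2 * (m1 * m2)%:P * 'X^(b + b) by rewrite exprD; ring.
  rewrite -exprD addn2.
  have -> : ((d + e).-2.+2 = d + e)%N by lia.
  rewrite coefMXn; case: ltnP => [_|le_bi]; first by rewrite addr0.
  by rewrite coefMC coef_W_exp_low ?mul0r ?addr0 //; lia.
- by move=> j le_jK lt_j; rewrite hx ?coef_approx_low //; lia.
- by move=> j le_jK lt_j; rewrite hy ?coef_approx_low //; lia.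
- by move=> j le_jK; apply: hx; lia.
- by move=> j le_jK; apply: hy; lia.
Qed.

Lemma approximates_A1 y : y \in G 1 -> exists l m, approximates 1 y l m.
Proof.
move=> Gy; have [l hl] := near_A1 Gy.
exists l, (((al y)`_(a + b) - l * W`_(a + b)) / W`_a) => i le_iN.
rewrite approxE // expr1 mulrDr coefD coefMC mulrA coefMXn coefMC mul1n ltnS leq_eqVlt.
case/orP=> [/eqP->|lt_i].
  by rewrite ltnNge leq_addl /= addnK; field.
rewrite hl // coefZ; case: ltnP => [_|le_bi]; first by rewrite addr0 mulrC.
by rewrite (low_A1 G1x0 (i := (i - b)%N)) ?mul0r ?addr0 1?mulrC //; lia.
Qed.

Lemma approximates_homog d : (0 < d)%N ->
  forall x, x \in G d -> exists l m, approximates d x l m.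
Proof.
move: d; apply: (homog_ind gradingG s1 gen_s (P := fun d x => exists l m, approximates d x l m)).
- by move=> d; exists 0, 0; exact: approximates0.
- move=> d x y [l1 [m1 hx]] [l2 [m2 hy]].
  by exists (l1 + l2), (m1 + m2); exact: approximatesD.
- exact: approximates_A1.
move=> d x y d_gt0 _ Gy [l1 [m1 hx]]; have [l2 [m2 hy]] := approximates_A1 Gy.
by exists (l1 * l2), (l1 * m2 + m1 * l2); rewrite -addn1; exact: approximatesM.
Qed.

Lemma approximates_homog_lam_mu d x : (d * a + b <= N)%N -> (0 < d)%N -> x \in G d ->
  approximates d x (lam d x) (mu d x).
Proof.
move=> le_N d_gt0 Gx; have [l [m hx]] := approximates_homog d_gt0 Gx.
by have [-> ->] := approximates_lam_mu le_N d_gt0 hx.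
Qed.

Lemma lam_mu_mul d e x y : ((d + e) * a + b <= N)%N -> (0 < d)%N -> (0 < e)%N ->
  x \in G d -> y \in G e ->
  lam (d + e) (x * y) = lam d x * lam e y /\
  mu (d + e) (x * y) = lam d x * mu e y + mu d x * lam e y.
Proof.
move=> le_N d_gt0 e_gt0 Gx Gy; apply: approximates_lam_mu; rewrite ?addn_gt0 ?d_gt0 //.
by apply: approximatesM => //; apply: approximates_homog_lam_mu => //; lia.
Qed.

Lemma near_line_homog d : (N < d * a + b)%N -> (0 < d)%N -> near_line N.+1 (G d) (W ^+ d).
Proof.
move=> lt_N d_gt0 x Gx; have [l [m hx]] := approximates_homog d_gt0 Gx.
by exists l => i le_iN _; rewrite hx ?coef_approx_mid ?coefZ //; lia.
Qed.

Lemma exists_mu1_neq0 : (a + b <= N)%N -> ~ near_line (a + b.+1) (G 1) W ->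
  exists2 y, y \in G 1 & mu 1 y != 0.
Proof.
move=> le_N not_near; apply: NNPP => no_y; apply: not_near => y Gy.
have mu0 : mu 1 y = 0 by apply/eqP/negPn/negP => mu_neq0; apply: no_y; exists y.
have approx_y : approximates 1 y (lam 1 y) 0.
  by rewrite -mu0; apply: approximates_homog_lam_mu; rewrite ?mul1n.
exists (lam 1 y) => i le_iN lt_i; rewrite approx_y //; last lia.
by rewrite approxE // polyC0 mul0r addr0 expr1 coefMC coefZ mulrC.
Qed.

Section Construction.
Variable r : nat.
Hypotheses (r_gt0 : (0 < r)%N) (le_rN : (r * a + b <= N)%N).
Hypothesis al1 : forall i, (i <= N)%N -> (al 1)`_i = (1 : {poly k})`_i.
Hypothesis G0_scalar : forall z, z \in G 0 -> exists c : k, z = c%:A.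

Local Notation cQ := (congr_mod (Q_rels k r)).

Definition psi d z : {poly {poly k}} :=
  qform (QX k) (QY k) d (lam d z)%:P%:P (mu d z)%:P%:P.

Definition phi x := \sum_(d < r.+1) psi d (hcomp n G d x).

Lemma le_dN d : (d <= r)%N -> (d * a + b <= N)%N.
Proof. by move=> le_dr; apply: leq_trans le_rN; rewrite leq_add2r leq_mul2r le_dr orbT. Qed.

Lemma psi_lin d c x y : (d <= r)%N -> psi d (c *: x + y) = c%:P%:P * psi d x + psi d y.
Proof.
move=> le_dr; have le_N := le_dN le_dr.
rewrite /psi /qform lam_lin ?mu_lin //; last lia.
by rewrite !polyCD !polyCM; ring.
Qed.

Lemma psi0 d : (d <= r)%N -> psi d 0 = 0.
Proof.
move=> le_dr; have := psi_lin 1 0 0 le_dr; rewrite scale1r addr0 mul1r => psi00.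
by apply: (@addrI _ (psi d 0)); rewrite -psi00 addr0.
Qed.

Lemma phi_lin c x y : phi (c *: x + y) = c%:P%:P * phi x + phi y.
Proof.
rewrite /phi mulr_sumr -big_split /=; apply: eq_bigr => d _.
by rewrite linearP /= psi_lin // -ltnS.
Qed.

Lemma phiD x y : phi (x + y) = phi x + phi y.
Proof. by rewrite -[x]scale1r phi_lin mul1r scale1r. Qed.

Lemma phi0 : phi 0 = 0.
Proof. by apply: (@addrI _ (phi 0)); rewrite -phiD !addr0. Qed.

Lemma phiZ c x : phi (c *: x) = c%:P%:P * phi x.
Proof. by rewrite -[c *: x]addr0 phi_lin phi0 addr0. Qed.

Lemma phi_sum (I : finType) (F : I -> A) : phi (\sum_i F i) = \sum_i phi (F i).
Proof. exact: (big_morph phi phiD phi0). Qed.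

Lemma phi_homog d x : x \in G d -> phi x = if (d <= r)%N then psi d x else 0.
Proof.
move=> Gx; rewrite /phi (eq_bigr (fun j : 'I_r.+1 => if (j : nat) == d then psi d x else 0)).
  case: ifP => [le_dr|/negbT lt_rd].
    rewrite (bigD1 (Ordinal (le_dr : (d < r.+1)%N))) //= eqxx big1 ?addr0 // => j.
    by rewrite -val_eqE /= => /negbTE->.
  rewrite big1 // => j _; case: eqP => // eq_jd.
  by move: lt_rd (ltn_ord j); rewrite eq_jd ltnS => /negP.
move=> j _; rewrite (hcompE gradingG _ Gx); case: eqP => [->|_] //.
by rewrite psi0 // -ltnS.
Qed.

Lemma phi_scalar c : phi c%:A = c%:P%:P.
Proof.
have G0c : c%:A \in G 0 by rewrite rpredZ ?(one_G0 gradingG).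
have le_bN : (b <= N)%N by apply: leq_trans le_rN; rewrite leq_addl.
rewrite (phi_homog G0c) /psi /qform /mu /lam !mul0n add0n !expr0 !divr1.
rewrite !coef_alZ ?al1 // !coef1 eqxx (negbTE (lt0n_neq0 b_gt0)) /=.
by rewrite !mulr1 !mulr0 subrr !polyC0 mul0r addr0.
Qed.

Lemma phi_mul_homog d e x y : x \in G d -> y \in G e -> cQ (phi (x * y)) (phi x * phi y).
Proof.
move=> Gx Gy; case: d Gx => [|d] Gx.
  by have [c ->] := G0_scalar Gx; rewrite mulr_algl phiZ phi_scalar; exact: congr_mod_refl.
case: e Gy => [|e] Gy.
  by have [c ->] := G0_scalar Gy; rewrite mulr_algr phiZ phi_scalar mulrC; exact: congr_mod_refl.
rewrite (phi_homog (mul_homog gradingG Gx Gy)) (phi_homog Gx) (phi_homog Gy).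
have [le_dr|lt_rd] := leqP d.+1 r; last first.
  by rewrite mul0r ifN; [exact: congr_mod_refl | lia].
have [le_er|lt_re] := leqP e.+1 r; last first.
  by rewrite mulr0 ifN; [exact: congr_mod_refl | lia].
rewrite /psi.
apply: (congr_mod_trans _ (qform_Q_mul r _ _ _ _ (ltn0Sn d) (ltn0Sn e))).
case: ifP => [le_der|/negbT lt_rde].
  have [-> ->] := lam_mu_mul (le_dN le_der) (ltn0Sn _) (ltn0Sn _) Gx Gy.
  by rewrite -!polyCM -!polyCD; exact: congr_mod_refl.
rewrite /congr_mod sub0r -mulN1r; apply: in_idealMl; apply: qform_Q_high; lia.
Qed.

Lemma phi_mul x y : cQ (phi (x * y)) (phi x * phi y).
Proof.
rewrite -{1}(hcomp_sum gradingG x) -{1}(hcomp_sum gradingG y) mulr_suml phi_sum.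
rewrite -{2}(hcomp_sum gradingG x) phi_sum mulr_suml; apply: congr_mod_sum => i.
rewrite mulr_sumr phi_sum -{2}(hcomp_sum gradingG y) phi_sum mulr_sumr.
by apply: congr_mod_sum => j; exact: phi_mul_homog (hcomp_mem _ _ _ _) (hcomp_mem _ _ _ _).
Qed.

Lemma phi_x0 : phi x0 = QX k.
Proof.
have lam1 : lam 1 x0 = 1 by rewrite /lam mul1n expr1 coef_drop_poly add0n divff.
have mu1 : mu 1 x0 = 0.
  by rewrite /mu lam1 mul1r expr1 coef_drop_poly mul1n addnC subrr mul0r.
rewrite (phi_homog G1x0) r_gt0 /psi /qform lam1 mu1 expr1 !polyC0 !polyC1.
by rewrite mul0r addr0 mul1r.
Qed.

Lemma phi_surj y1 : y1 \in G 1 -> mu 1 y1 != 0 -> quot_hom_surj (Q_rels k r) phi.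
Proof.
move=> G1y1 mu_y1.
have phiY : phi ((mu 1 y1)^-1 *: (y1 - lam 1 y1 *: x0)) = QY k.
  rewrite phiZ phiD -scaleNr phiZ phi_x0 (phi_homog G1y1) r_gt0 /psi /qform expr1 expr0.
  rewrite mul1r addrAC !polyCN mulNr addrN add0r mulrA -!polyCM mulVf //.
  by rewrite !polyC1 mul1r.
apply: bivariate_poly_ind.
- by move=> c; exists c%:A; rewrite phi_scalar; exact: congr_mod_refl.
- by exists x0; rewrite phi_x0; exact: congr_mod_refl.
- by exists ((mu 1 y1)^-1 *: (y1 - lam 1 y1 *: x0)); rewrite phiY; exact: congr_mod_refl.
- by move=> p q [z1 h1] [z2 h2]; exists (z1 + z2); rewrite phiD; exact: congr_modD.
move=> p q [z1 h1] [z2 h2]; exists (z1 * z2).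
exact: congr_mod_trans (phi_mul z1 z2) (congr_modM h1 h2).
Qed.

Lemma phi_quot_hom : quot_hom (fun c : k => c%:P%:P) (Q_rels k r) phi.
Proof.
split=> [c x y||]; last exact: phi_mul.
  by rewrite phi_lin; exact: congr_mod_refl.
by have := phi_scalar 1; rewrite scale1r => ->; exact: congr_mod_refl.
Qed.

End Construction.
End Approximant.

Lemma exists_max_agreement r : (0 < r)%N -> (forall P, ~ near_line N.+1 (G r) P) ->
  exists b, [/\ (0 < b)%N, near_line (a + b) (G 1) W,
              ~ near_line (a + b.+1) (G 1) W & (r * a + b <= N)%N].
Proof.
move=> r_gt0 not_line.
have near1 : near_line (a + 1) (G 1) W.
  move=> y Gy; exists ((al y)`_a / W`_a) => i le_iN; rewrite coefZ addn1 ltnS leq_eqVlt.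
  case/orP=> [/eqP->|lt_ia]; first by rewrite divfK.
  by rewrite (low_A1 Gy lt_ia) (low_A1 G1x0 lt_ia) mulr0.
have small b : (0 < b)%N -> near_line (a + b) (G 1) W -> (r * a + b <= N)%N.
  move=> b_gt0 near_b; rewrite leqNgt; apply/negP => lt_N.
  exact: not_line _ (near_line_homog b_gt0 near_b lt_N r_gt0).
have [|b [b_gt0 near_b not_near]] :=
  exists_threshold (P := fun c => near_line (a + c) (G 1) W) (m := N) near1.
  by move=> /(small N.+1 isT); rewrite addnS ltnNge leq_addl.
by exists b; split=> //; exact: small.
Qed.

End MinOrder.

Lemma exists_Q_quotient r :
  (forall i, (i <= N)%N -> (al 1)`_i = (1 : {poly k})`_i) ->
  (forall z, z \in G 0 -> exists c : k, z = c%:A) ->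
  (forall P, ~ near_line N.+1 (G r) P) ->
  exists phi : A -> {poly {poly k}},
    quot_hom (fun c : k => c%:P%:P) (Q_rels k r) phi /\ quot_hom_surj (Q_rels k r) phi.
Proof.
move=> al1 G0_scalar not_line.
have r_gt0 : (0 < r)%N.
  by rewrite lt0n; apply/eqP => r0; apply: (not_line (al 1)); rewrite r0; exact: near_line_G0.
have [|a [x0 [G1x0 le_aN Wa_neq0 low_A1]]] := exists_min_order.
  by move=> near0; apply: (not_line 0) => x Gx; apply: (al_vanish_of_A1 near0 r_gt0 Gx).
have [b [b_gt0 near_b not_near le_rN]] :=
  exists_max_agreement G1x0 le_aN Wa_neq0 low_A1 r_gt0 not_line.
have le_abN : (a + b <= N)%N by apply: leq_trans le_rN; rewrite leq_add2r leq_pmull.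
have [y1 G1y1 mu_y1] := exists_mu1_neq0 G1x0 le_aN Wa_neq0 low_A1 b_gt0 near_b le_abN not_near.
exists (phi a x0 b r); split.
  exact (phi_quot_hom G1x0 le_aN Wa_neq0 low_A1 b_gt0 near_b r_gt0 le_rN al1 G0_scalar).
exact (phi_surj G1x0 le_aN Wa_neq0 low_A1 b_gt0 near_b r_gt0 le_rN al1 G0_scalar G1y1 mu_y1).
Qed.

End TruncatedHom.

Theorem proposition2p5
  (k : closedFieldType) (hk : [pchar k] =i pred0)
  (A : falgType k) (hcomm : forall x y : A, x * y = y * x)
  (n : nat) (G : nat -> {vspace A}) (hstd : is_standard_grading n G)
  (hnpi : ~ is_principal_ideal_algebra A)
  (r : nat) (hr : is_crit_deg G r) :
  exists phi : A -> {poly {poly k}},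
    quot_hom (fun c : k => c%:P%:P) (Q_rels k r) phi /\
    quot_hom_surj (Q_rels k r) phi.
Proof.
have [gradingG maxM [s [s1 gen_s]]] := hstd.
have [[N [al [al_hom [u [v [Gu Gv indep]]]]]] _] := hr.
have [al_lin al1 al_mul] := coef_quot_hom al_hom.
apply: (exists_Q_quotient gradingG s1 _ al_lin al_mul al1 (G0_scalar gradingG maxM hcomm)).
  by move=> x /gen_s.
by move=> P; exact: indep_not_near_line Gu Gv indep.
Qed.
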